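(* Let $f$ be a probability density supported on $\mathbb{R}_+=[0,\infty)$ that is càdlàg (right-continuous with left limits at every point). Let $\mathcal{M}$ be the class of non-increasing probability densities on $\mathbb{R}_+$ and define $$\pi_0:=\sup\big\{\pi:\exists g\in\mathcal{M}\text{ such that } f-\pi g\ge 0\text{ a.e.}\big\}.$$ Then $$\pi_0=\int_0^\infty h_0(x)\,dx,\qquad h_0(x):=\operatorname{ess\,inf}\{f(y): y\le x\}.$$ Moreover, if $\pi_0>0$, the supremum is attained by the density $g_0:=h_0/\pi_0$ and by no other density in $\mathcal{M}$ (densities identified up to a.e. equality).
   Context: For a function $f$ and $x\ge 0$, $\operatorname{ess\,inf}\{f(y):y\le x\}$ denotes the essential infimum of $f$ over $[0,x]$ with respect to Lebesgue measure, i.e. the supremum of $t$ such that $\{y\in[0,x]: f(y)<t\}$ has Lebesgue measure zero. Densities are understood up to Lebesgue-null sets. *)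

From HB Require Import structures.
From mathcomp Require Import all_boot all_order all_algebra.
From mathcomp Require Import all_classical all_reals all_analysis.
Set Implicit Arguments. Unset Strict Implicit. Unset Printing Implicit Defensive.
Import Order.TTheory GRing.Theory Num.Theory.
Import numFieldNormedType.Exports.
Local Open Scope classical_set_scope.
Local Open Scope ring_scope.

(* f is a probability density on R_+ = [0, +oo[ (only its values on R_+ matter). *)
Definition prob_density_Rplus (R : realType) (f : R -> R) : Prop :=
  measurable_fun (`[0%R, +oo[ : set R) f /\
  (forall x : R, 0 <= x -> 0 <= f x) /\
  ((\int[@lebesgue_measure R]_(x in `[0%R, +oo[) (f x)%:E)%E = 1%E).

Definition cadlag_Rplus (R : realType) (f : R -> R) : Prop :=
  (forall x : R, 0 <= x -> f @ x^'+ --> f x) /\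
  (forall x : R, 0 < x -> cvg (f @ x^'-)).

(* the class M of non-increasing probability densities on R_+
   (monotonicity required on ]0,+oo[, densities being defined up to null sets) *)
Definition nonincr_density (R : realType) (g : R -> R) : Prop :=
  prob_density_Rplus g /\
  (forall x y : R, 0 < x -> x <= y -> g y <= g x).

Definition dominated_ae (R : realType) (f g : R -> R) (p : R) : Prop :=
  {ae @lebesgue_measure R, forall x : R, 0 <= x -> 0 <= f x - p * g x}.

Definition pi0 (R : realType) (f : R -> R) : R :=
  sup [set p : R | exists g : R -> R, nonincr_density g /\ dominated_ae f g p].

(* h_0(x) = ess inf { f(y) : 0 <= y <= x } w.r.t. Lebesgue measure:
   the supremum of t such that { y in [0,x] : f y < t } is Lebesgue-null.
   Extended-real valued (it is +oo when [0,x] is null, i.e. x <= 0). *)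
Definition h0 (R : realType) (f : R -> R) (x : R) : \bar R :=
  ereal_sup [set t%:E | t in
    [set t : R | @lebesgue_measure R [set y : R | 0 <= y <= x /\ f y < t] = 0%E]].

(* g_0 = h_0 / pi_0 (real-valued; h_0 is finite on ]0,+oo[ ) *)
Definition g0 (R : realType) (f : R -> R) (x : R) : R :=
  fine (h0 f x) / pi0 f.

From mathcomp Require Import all_boot all_order all_algebra.
From mathcomp Require Import all_classical all_reals all_analysis.
From mathcomp Require Import measurable_realfun.
Import Order.TTheory GRing.Theory Num.Theory.
Local Open Scope classical_set_scope.
Local Open Scope ring_scope.
Set Implicit Arguments. Unset Strict Implicit. Unset Printing Implicit Defensive.

(* Write h0R for the real-valued version of h0 f, the essential infimum of f
   over [0, x].  The proof rests on three facts about h0R: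
   - it is non-negative, non-increasing, and finite on ]0, +oo[ (otherwise
     [0, x] would be a countable union of null level sets of f), hence
     measurable;
   - h0R <= f almost everywhere (the essential-infimum property, again by a
     countable union over rational levels and rational endpoints);
   - every non-increasing g with f - p g >= 0 a.e. satisfies p g <= h0R
     pointwise on ]0, +oo[.
   Integrating the last fact bounds every admissible weight p by the mass of
   h0R, which is finite by the second fact; when that mass is positive the
   normalised h0R attains it, so it equals pi0 f.  Uniqueness follows because
   a second maximiser g satisfies pi0 f * g <= h0R with equal integrals. *)

Lemma sup_max {R : realType} (S : set R) (m : R) :
  S m -> ubound S m -> sup S = m.
Proof.
move=> Sm ubm; apply/le_anti; rewrite ge_sup//; last by exists m.
by rewrite ub_le_sup//; exists m.
Qed.

Section negligible_facts.
Context {d} {T : measurableType d} {R : realType}.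
Variable mu : {measure set T -> \bar R}.

Lemma negligible_bigcup_countable (I : countType) (F : I -> set T) :
  (forall i, mu.-negligible (F i)) -> mu.-negligible (\bigcup_i F i).
Proof.
move=> negF.
pose G n := if @unpickle I n is Some i then F i else set0.
apply: (@negligibleS _ _ _ mu (\bigcup_n G n)).
  by move=> x [i _ Fix]; exists (pickle i) => //; rewrite /G pickleK.
apply: negligible_bigcup => n; rewrite /G.
by case: (unpickle n) => [i|]; [exact: negF|exact: negligible_set0].
Qed.

Lemma ae_outside (N : set T) (P : T -> Prop) :
  mu.-negligible N -> (forall x, ~ N x -> P x) -> {ae mu, forall x, P x}.
Proof.
move=> negN NP; apply: negligibleS negN => x /= nPx.
by apply: contrapT => Nx; exact/nPx/NP.
Qed.

Lemma ae_eq_of_le_integral (D : set T) (u v : T -> R) :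
  measurable D -> measurable_fun D u -> measurable_fun D v ->
  (forall x, D x -> 0 <= u x <= v x) ->
  (\int[mu]_(x in D) (u x)%:E)%E \is a fin_num ->
  (\int[mu]_(x in D) (v x)%:E = \int[mu]_(x in D) (u x)%:E)%E ->
  {ae mu, forall x, D x -> u x = v x}.
Proof.
move=> mD mu_ mv uv finu intuv.
have mdiff : measurable_fun D (fun x => (v x - u x)%:E).
  by apply/measurable_EFinP; exact: measurable_funB.
have split_v : (\int[mu]_(x in D) (v x)%:E =
    \int[mu]_(x in D) (u x)%:E + \int[mu]_(x in D) (v x - u x)%:E)%E.
  rewrite -ge0_integralD//; first by apply: eq_integral => x _; rewrite -EFinD addrC subrK.
  - by move=> x Dx; rewrite lee_fin; case/andP: (uv x Dx).
  - exact/measurable_EFinP.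
  - by move=> x Dx; rewrite lee_fin subr_ge0; case/andP: (uv x Dx).
have int_diff0 : (\int[mu]_(x in D) `|(v x - u x)%:E| = 0)%E.
  have <- : (\int[mu]_(x in D) (v x - u x)%:E = 0)%E.
    move/(congr1 (fun z => z - \int[mu]_(x in D) (u x)%:E)%E): split_v.
    by rewrite /= intuv subee// [X in (X - _)%E]addeC addeK.
  apply: eq_integral => x /[!inE] Dx.
  by rewrite gee0_abs// lee_fin subr_ge0; case/andP: (uv x Dx).
move/(ae_eq_integral_abs mu mD mdiff): int_diff0.
by apply: filterS => x + Dx => /(_ Dx) [] /eqP; rewrite subr_eq0 => /eqP.
Qed.

End negligible_facts.

(* A real function which is non-increasing on ]0, +oo[ is measurable there:
   composing with exp turns it into a globally monotone function. *)
Lemma measurable_nonincreasing_pos (R : realType) (u : R -> R) :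
  (forall x y, 0 < x -> x <= y -> u y <= u x) ->
  measurable_fun (`]0, +oo[%classic : set R) u.
Proof.
move=> u_ni; pose v := u \o @expR R.
have mv : measurable_fun setT v.
  by apply: nonincreasing_measurable => // a b ab; rewrite /v/= u_ni ?expR_gt0 ?ler_expR.
have : measurable_fun (`]0, +oo[%classic : set R) (v \o @ln R).
  by apply: measurableT_comp => //; exact: measurable_funS (@measurable_ln R).
apply: eq_measurable_fun => x /[!inE] /= /[!in_itv] /= /andP[x0 _].
by rewrite /v/= lnK// posrE.
Qed.

#[local] Instance lebesgue_ae_filter (R : realType) :
  Filter (almost_everywhere (@lebesgue_measure R)) := ae_filter_ringOfSetsType _.

Lemma lebesgue_negligible_set1 {R : realType} (a : R) :
  (@lebesgue_measure R).-negligible [set a].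
Proof.
by exists [set a]; split; [exact: measurable_set1|exact: lebesgue_measure_set1|].
Qed.

Lemma ae_neq0 (R : realType) : {ae @lebesgue_measure R, forall x : R, x != 0}.
Proof.
apply: ae_outside (lebesgue_negligible_set1 0) _.
by move=> x /eqP.
Qed.

Lemma integral_Rplus_pos (R : realType) (F : R -> \bar R) :
  measurable_fun (`]0, +oo[%classic : set R) F ->
  (\int[@lebesgue_measure R]_(x in `[0%R, +oo[) F x =
   \int[@lebesgue_measure R]_(x in `]0%R, +oo[) F x)%E.
Proof.
have puncture : (`[0, +oo[%classic : set R) `\ 0 = `]0, +oo[%classic.
  apply/seteqP; split => x /=; rewrite !in_itv/= !andbT.
    by move=> [x0 /eqP x_neq0]; rewrite lt_neqAle eq_sym x_neq0.
  by move=> x0; split; [exact: ltW|move=> /= x_eq0; move: x0; rewrite x_eq0 ltxx].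
by move=> mF; rewrite -puncture integral_setD1// puncture.
Qed.

Lemma integral_scaled_density (R : realType) (g : R -> R) (p : R) :
  prob_density_Rplus g -> 0 <= p ->
  (\int[@lebesgue_measure R]_(x in `[0%R, +oo[) (p * g x)%:E = p%:E)%E.
Proof.
move=> [mg [g_ge0 g_int1]] p0; under eq_integral => x _ do rewrite EFinM.
rewrite ge0_integralZl_EFin//; first by rewrite g_int1 mule1.
- by move=> x; rewrite /= in_itv/= andbT => x0; rewrite lee_fin g_ge0.
- exact/measurable_EFinP.
Qed.

Section prefix_essential_infimum.
Variables (R : realType) (f : R -> R).
Hypothesis mf : measurable_fun (`[0, +oo[%classic : set R) f.
Hypothesis f_ge0 : forall x, 0 <= x -> 0 <= f x.
Local Notation mu := (@lebesgue_measure R).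

Definition lower_set (x t : R) : set R := [set y | 0 <= y <= x /\ f y < t].

Definition ess_lower_bound (x t : R) : Prop := mu (lower_set x t) = 0%E.

Definition h0R (x : R) : R := fine (h0 f x).

Lemma measurable_lower_set x t : measurable (lower_set x t).
Proof.
have := mf (measurable_itv `[0, +oo[) (measurable_itv `]-oo, t[).
move=> /(measurableI `[0, x]%classic) -/(_ (measurable_itv _)).
congr measurable; apply/seteqP; split => y /=.
  by rewrite !in_itv/= andbT => -[/andP[y0 yx] [_ ft]]; split => //; rewrite y0.
by move=> [/andP[y0 yx] ft]; rewrite !in_itv/= y0 yx ft.
Qed.

Lemma ess_lower_bound_restrict z x t :
  z <= x -> ess_lower_bound x t -> ess_lower_bound z t.
Proof.
move=> zx; apply: subset_measure0 => //; try exact: measurable_lower_set.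
by move=> y [/andP[y0 yz] ft]; split => //; rewrite y0 (le_trans yz zx).
Qed.

Lemma ess_lower_bound_le x s t :
  s <= t -> ess_lower_bound x t -> ess_lower_bound x s.
Proof.
move=> st; apply: subset_measure0 => //; try exact: measurable_lower_set.
by move=> y [yx fy]; split => //; exact: lt_le_trans st.
Qed.

Lemma ess_lower_bound_nonpos x t : t <= 0 -> ess_lower_bound x t.
Proof.
move=> t0; rewrite /ess_lower_bound (_ : lower_set x t = set0) ?measure0//.
apply/seteqP; split => // y [/andP[y0 _] fy].
by have := f_ge0 y0; rewrite leNgt (lt_le_trans fy t0).
Qed.

Lemma ess_lower_bound_le_h0 x t : ess_lower_bound x t -> (t%:E <= h0 f x)%E.
Proof. by move=> lbt; apply: ereal_sup_ubound; exists t. Qed.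

Lemma lt_h0_ess_lower_bound x t : (t%:E < h0 f x)%E -> ess_lower_bound x t.
Proof.
move=> /ereal_sup_gt[_ [s lbs <-]]; rewrite lte_fin => ts.
exact: ess_lower_bound_le (ltW ts) lbs.
Qed.

Lemma h0_ge0 x : (0 <= h0 f x)%E.
Proof. by apply: ess_lower_bound_le_h0; exact: ess_lower_bound_nonpos. Qed.

Lemma h0_nonincreasing x y : x <= y -> (h0 f y <= h0 f x)%E.
Proof.
move=> xy; apply: ge_ereal_sup => _ [t lbt <-].
by apply: ess_lower_bound_le_h0; exact: ess_lower_bound_restrict lbt.
Qed.

(* On [0, x] with x > 0, a set of positive measure, the real-valued f cannot
   be essentially above every level: otherwise [0, x] would be the countable
   union of the null sets lower_set x n. *)
Lemma h0_lt_pinfty x : 0 < x -> (h0 f x < +oo)%E.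
Proof.
move=> x0; rewrite ltNge leye_eq; apply/negP => /eqP h0oo.
have lb_nat n : ess_lower_bound x n%:R.
  by apply: lt_h0_ess_lower_bound; rewrite h0oo ltry.
have cover : `[0, x]%classic `<=` \bigcup_n lower_set x n%:R.
  move=> y /=; rewrite in_itv/= => /andP[y0 yx].
  by exists (Num.truncn (f y)).+1 => //; rewrite /lower_set/= y0 yx truncnS_gt.
have : mu.-negligible `[0, x]%classic.
  apply: (@negligibleS _ _ _ mu _ _ cover); apply: negligible_bigcup => n.
  by exists (lower_set x n%:R); split; [exact: measurable_lower_set|exact: lb_nat|].
move=> /negligibleP -/(_ (measurable_itv _)) null_itv.
have := eq_trans (esym null_itv) (lebesgue_measure_itv `[0, x]).
by rewrite /= lte_fin x0 -EFinD subr0 => -[] /eqP; rewrite eq_sym gt_eqF.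
Qed.

Lemma h0E x : 0 < x -> h0 f x = (h0R x)%:E.
Proof.
move=> x0; rewrite /h0R fineK// ge0_fin_numE ?h0_ge0//; exact: h0_lt_pinfty.
Qed.

Lemma h0R_ge0 x : 0 <= h0R x.
Proof. exact/fine_ge0/h0_ge0. Qed.

Lemma h0R_nonincreasing x y : 0 < x -> x <= y -> h0R y <= h0R x.
Proof.
move=> x0 xy; rewrite -lee_fin -!h0E ?(lt_le_trans x0 xy)//.
exact: h0_nonincreasing.
Qed.

Lemma ess_lower_bound_le_h0R x t : 0 < x -> ess_lower_bound x t -> t <= h0R x.
Proof. by move=> x0 lbt; rewrite -lee_fin -h0E//; exact: ess_lower_bound_le_h0. Qed.

Lemma lt_h0R_ess_lower_bound x t : 0 < x -> t < h0R x -> ess_lower_bound x t.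
Proof. by move=> x0 th; apply: lt_h0_ess_lower_bound; rewrite h0E// lte_fin. Qed.

(* h0R is measurable on R_+: monotone on ]0, +oo[, plus the single point 0. *)
Lemma measurable_h0R : measurable_fun (`[0, +oo[%classic : set R) h0R.
Proof.
have -> : `[0, +oo[%classic = [set 0] `|` (`]0, +oo[%classic : set R).
  apply/seteqP; split => x /=; rewrite !in_itv/= !andbT; last by case=> [->|/ltW].
  by rewrite le_eqVlt => /orP[/eqP ->|]; [left|right].
apply/measurable_funU => //; split; first exact: measurable_fun_set1.
exact: measurable_nonincreasing_pos h0R_nonincreasing.
Qed.

(* For a fixed level q, the points x of R_+ where q is an essential lower
   bound of f on [0, x] but f x < q form a null set: apart from the largest
   such x (if any), each of them lies in some null set lower_set r q with r
   rational and q an essential lower bound on [0, r]. *)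
Lemma negligible_below_ess_lower_bound q :
  mu.-negligible [set x | 0 <= x /\ ess_lower_bound x q /\ f x < q].
Proof.
pose below_rat (r : rat) :=
  [set y | ess_lower_bound (ratr r) q /\ lower_set (ratr r) q y].
pose last_point :=
  [set x | ess_lower_bound x q /\ forall z, x < z -> ~ ess_lower_bound z q].
have cover : [set x | 0 <= x /\ ess_lower_bound x q /\ f x < q] `<=`
    (\bigcup_r below_rat r) `|` last_point.
  move=> x [x0 [lbx fx]].
  have [[z xz lbz]|no_z] := pselect (exists2 z, x < z & ess_lower_bound z q).
    left; have /rat_in_itvoo[r] := xz; rewrite in_itv/= => /andP[xr rz].
    exists r => //; split; first exact: ess_lower_bound_restrict (ltW rz) lbz.
    by split => //; rewrite x0 (ltW xr).
  by right; split => // z xz lbz; apply: no_z; exists z.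
apply: (@negligibleS _ _ _ mu _ _ cover); apply: negligibleU.
  apply: negligible_bigcup_countable => r.
  have [lbr|nlbr] := pselect (ess_lower_bound (ratr r) q).
    exists (lower_set (ratr r) q); split; [exact: measurable_lower_set|exact: lbr|].
    by move=> y [].
  rewrite (_ : below_rat r = set0); first exact: negligible_set0.
  by apply/seteqP; split => // y [].
have [[x1 last_x1]|no_last] := pselect (exists x, last_point x); last first.
  rewrite (_ : last_point = set0); first exact: negligible_set0.
  by apply/seteqP; split => // x last_x; apply: no_last; exists x.
apply: (@negligibleS _ _ _ mu [set x1]); last exact: lebesgue_negligible_set1.
move=> x last_x; apply/eqP; rewrite eq_le !leNgt; apply/andP; split; apply/negP.
  by move=> x1x; case: last_x1 => _ /(_ _ x1x); case: last_x.
by move=> xx1; case: last_x => _ /(_ _ xx1); case: last_x1.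
Qed.

Lemma ae_h0R_le_f : {ae mu, forall x, 0 < x -> h0R x <= f x}.
Proof.
apply: (@negligibleS _ _ _ mu (\bigcup_(q : rat)
  [set x | 0 <= x /\ ess_lower_bound x (ratr q) /\ f x < ratr q])).
  move=> x /= /not_implyP[x0 /negP]; rewrite -ltNge => fx_lt.
  have /rat_in_itvoo[q] := fx_lt; rewrite in_itv/= => /andP[fq qh].
  exists q => //; split; first exact: ltW.
  by split => //; exact: lt_h0R_ess_lower_bound.
by apply: negligible_bigcup_countable => q; exact: negligible_below_ess_lower_bound.
Qed.

(* A non-increasing g with f >= p g a.e. satisfies p g <= h0R on ]0, +oo[:
   on [0, x], f(y) >= p g(y) >= p g(x) for a.e. y, so p g(x) is an essential
   lower bound of f on [0, x]. *)
Lemma dominated_le_h0R (g : R -> R) (p x : R) :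
  (forall y z, 0 < y -> y <= z -> g z <= g y) -> dominated_ae f g p ->
  0 <= p -> 0 < x -> p * g x <= h0R x.
Proof.
move=> g_ni dom p0 x0; apply: ess_lower_bound_le_h0R => //.
apply/negligibleP; first exact: measurable_lower_set.
apply: negligibleS (negligibleU (lebesgue_negligible_set1 0) dom).
move=> y [/andP[y0 yx] fy]; move: y0; rewrite le_eqVlt => /orP[/eqP y0|y0].
  by left.
right => /(_ (ltW y0)); rewrite subr_ge0 => pgy_le.
have := lt_le_trans fy (le_trans (ler_wpM2l p0 (g_ni _ _ y0 yx)) pgy_le).
by rewrite ltxx.
Qed.

(* h0 f and h0R differ only at 0, so they have the same integral. *)
Lemma integral_h0E :
  (\int[mu]_(x in `[0%R, +oo[) h0 f x =
   \int[mu]_(x in `[0%R, +oo[) (h0R x)%:E)%E.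
Proof.
have mh0R : measurable_fun (`]0, +oo[%classic : set R) (fun x => (h0R x)%:E).
  by apply/measurable_EFinP; exact: measurable_nonincreasing_pos h0R_nonincreasing.
have h0E_pos x : x \in (`]0, +oo[%classic : set R) -> h0 f x = (h0R x)%:E.
  by rewrite inE/= in_itv/= andbT; exact: h0E.
have mh0 : measurable_fun (`]0, +oo[%classic : set R) (h0 f).
  by apply: eq_measurable_fun mh0R => x /h0E_pos ->.
by rewrite !integral_Rplus_pos//; exact: eq_integral.
Qed.

Hypothesis f_int1 : (\int[mu]_(x in `[0%R, +oo[) (f x)%:E = 1)%E.

(* Since h0R <= f a.e., the mass of h0R is at most that of f. *)
Lemma integral_h0R_le1 : (\int[mu]_(x in `[0%R, +oo[) (h0R x)%:E <= 1)%E.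
Proof.
rewrite -f_int1; apply: ae_ge0_le_integral => //.
- by move=> x _; rewrite lee_fin h0R_ge0.
- by apply/measurable_EFinP; exact: measurable_h0R.
- by move=> x; rewrite /= in_itv/= andbT => x0; rewrite lee_fin f_ge0.
- exact/measurable_EFinP.
apply: filterS2 (ae_neq0 R) ae_h0R_le_f => x x_neq0 h0R_le.
rewrite /= in_itv/= andbT => x0; rewrite lee_fin h0R_le//.
by rewrite lt_neqAle eq_sym x_neq0.
Qed.

(* The mass of h0, which will turn out to be pi0 f. *)
Definition h0_mass : R := fine (\int[mu]_(x in `[0%R, +oo[) (h0R x)%:E)%E.

Lemma h0_massE : (\int[mu]_(x in `[0%R, +oo[) (h0R x)%:E)%E = h0_mass%:E.
Proof.
have int_ge0 : (0 <= \int[mu]_(x in `[0%R, +oo[) (h0R x)%:E)%E.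
  by apply: integral_ge0 => x _; rewrite lee_fin h0R_ge0.
rewrite /h0_mass fineK// ge0_fin_numE//.
exact: le_lt_trans integral_h0R_le1 (ltry _).
Qed.

Lemma h0_mass_ge0 : 0 <= h0_mass.
Proof.
by rewrite -lee_fin -h0_massE; apply: integral_ge0 => x _; rewrite lee_fin h0R_ge0.
Qed.

(* Integrating p g <= h0R: every feasible weight p is at most h0_mass. *)
Lemma feasible_le_h0_mass (g : R -> R) (p : R) :
  nonincr_density g -> dominated_ae f g p -> p <= h0_mass.
Proof.
move=> [gd g_ni] dom; have [p_lt0|p0] := ltP p 0.
  exact: le_trans (ltW p_lt0) h0_mass_ge0.
rewrite -lee_fin -h0_massE -(integral_scaled_density gd p0).
have [mg [g_ge0 _]] := gd.
apply: ae_ge0_le_integral => //.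
- by move=> x; rewrite /= in_itv/= andbT => x0; rewrite lee_fin mulr_ge0// g_ge0.
- by apply/measurable_EFinP; exact: measurable_funM.
- by move=> x _; rewrite lee_fin h0R_ge0.
- by apply/measurable_EFinP; exact: measurable_h0R.
apply: filterS (ae_neq0 R) => x x_neq0; rewrite /= in_itv/= andbT => x0.
by rewrite lee_fin (dominated_le_h0R g_ni dom p0)// lt_neqAle eq_sym x_neq0.
Qed.

Lemma normalized_h0_feasible : 0 < h0_mass ->
  nonincr_density (fun x => h0R x / h0_mass) /\
  dominated_ae f (fun x => h0R x / h0_mass) h0_mass.
Proof.
move=> mass_gt0; split; first split; first split.
- by apply: measurable_funM => //; exact: measurable_h0R.
- split; first by move=> x _; rewrite divr_ge0 ?h0R_ge0 ?ltW.
  under eq_integral => x _ do rewrite mulrC EFinM.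
  rewrite ge0_integralZl_EFin ?h0_massE -?EFinM ?mulVf ?gt_eqF//.
  + by move=> x _; rewrite lee_fin h0R_ge0.
  + by apply/measurable_EFinP; exact: measurable_h0R.
  + by rewrite invr_ge0 ltW.
- by move=> x y x0 xy; rewrite ler_pM2r ?invr_gt0//; exact: h0R_nonincreasing.
apply: filterS2 (ae_neq0 R) ae_h0R_le_f => x x_neq0 h0R_le x0.
rewrite [h0_mass * _]mulrC divfK ?gt_eqF// subr_ge0 h0R_le//.
by rewrite lt_neqAle eq_sym x_neq0.
Qed.

Lemma pi0E : pi0 f = h0_mass.
Proof.
pose feasible := [set p | exists g, nonincr_density g /\ dominated_ae f g p].
have ub : ubound feasible h0_mass.
  by move=> p [g [gd dom]]; exact: feasible_le_h0_mass gd dom.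
have [mass_gt0|] := ltP 0 h0_mass.
  by apply: sup_max ub; exists (fun x => h0R x / h0_mass); exact: normalized_h0_feasible.
rewrite le_eqVlt ltNge h0_mass_ge0 orbF => /eqP mass0.
have [[p [g [gd dom]]]|no_feasible] := pselect (feasible !=set0).
  apply: sup_max ub; exists g; split => //; apply: aeW => x x0.
  by rewrite mass0 mul0r subr0 f_ge0.
rewrite mass0 -[RHS]sup0; congr sup; apply/seteqP; split => // p feas_p.
by apply: no_feasible; exists p.
Qed.

(* Uniqueness: a feasible g with weight h0_mass satisfies h0_mass g <= h0R on
   ]0, +oo[ with equal integrals, hence h0_mass g = h0R almost everywhere. *)
Lemma feasible_at_h0_mass_unique (g : R -> R) : 0 < h0_mass ->
  nonincr_density g -> dominated_ae f g h0_mass ->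
  {ae mu, forall x, 0 <= x -> g x = h0R x / h0_mass}.
Proof.
move=> mass_gt0 [gd g_ni] dom; have [mg [g_ge0 _]] := gd.
have pos_sub : (`]0, +oo[%classic : set R) `<=` `[0, +oo[%classic.
  by move=> x; rewrite /= !in_itv/= !andbT; exact: ltW.
have mg_pos : measurable_fun (`]0, +oo[%classic : set R) (fun x => h0_mass * g x).
  by apply: measurable_funM => //; exact: measurable_funS mg.
have mh0R_pos : measurable_fun (`]0, +oo[%classic : set R) h0R.
  exact: measurable_nonincreasing_pos h0R_nonincreasing.
have int_g : (\int[mu]_(x in `]0%R, +oo[) (h0_mass * g x)%:E)%E = h0_mass%:E.
  rewrite -integral_Rplus_pos; last exact/measurable_EFinP.
  exact: integral_scaled_density gd (ltW mass_gt0).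
have int_h0R : (\int[mu]_(x in `]0%R, +oo[) (h0R x)%:E)%E = h0_mass%:E.
  by rewrite -integral_Rplus_pos ?h0_massE//; exact/measurable_EFinP.
have ae_pos : {ae mu, forall x, `]0, +oo[%classic x -> h0_mass * g x = h0R x}.
  apply: (@ae_eq_of_le_integral _ _ _ mu) => //.
  - move=> x; rewrite /= in_itv/= andbT => x0.
    apply/andP; split; first by rewrite mulr_ge0 ?g_ge0 ?ltW.
    exact: dominated_le_h0R g_ni dom (ltW mass_gt0) x0.
  - by rewrite int_g.
  - by rewrite int_g int_h0R.
apply: filterS2 (ae_neq0 R) ae_pos => x x_neq0 eq_x x0.
rewrite -eq_x; last by rewrite /= in_itv/= andbT lt_neqAle eq_sym x_neq0.
by rewrite mulrAC mulfV ?gt_eqF// mul1r.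
Qed.

End prefix_essential_infimum.

Unset Implicit Arguments.

Theorem mainTheorem4 (R : realType) (f : R -> R) :
  prob_density_Rplus f -> cadlag_Rplus f ->
  ((pi0 f)%:E = (\int[@lebesgue_measure R]_(x in `[0%R, +oo[) h0 f x)%E) /\
  (0 < pi0 f ->
     (nonincr_density (g0 f) /\ dominated_ae f (g0 f) (pi0 f)) /\
     (forall g : R -> R, nonincr_density g -> dominated_ae f g (pi0 f) ->
        {ae @lebesgue_measure R, forall x : R, 0 <= x -> g x = g0 f x})).
Proof.
move=> [mf [f_ge0 f_int1]] _.
have pi0_mass : pi0 f = h0_mass f := pi0E mf f_ge0 f_int1.
split; first by rewrite integral_h0E// h0_massE// pi0_mass.
have -> : g0 f = fun x => h0R f x / h0_mass f.
  by apply/funext => x; rewrite /g0 pi0_mass.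
rewrite pi0_mass => mass_gt0; split; first exact: normalized_h0_feasible.
by move=> g; exact: feasible_at_h0_mass_unique.
Qed.
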